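(* Let $T$ be a bounded linear operator on a complex Hilbert space. If $T$ is coquasiposinormal and $T^n$ is quasiposinormal for some integer $n\ge1$, then $T^m$ is both quasiposinormal and coquasiposinormal for every integer $m\ge1$; that is, $\mathcal{N}(T^m)=\mathcal{N}(T^{*m})$ for every $m\ge1$.
   Context: $\mathcal{N}(A)$ denotes the kernel of $A$. An operator $A$ is quasiposinormal if $\mathcal{N}(A)\subseteq\mathcal{N}(A^* )$ (equivalently $\overline{\mathcal{R}(A)}\subseteq\overline{\mathcal{R}(A^* )}$), and coquasiposinormal if $\mathcal{N}(A^* )\subseteq\mathcal{N}(A)$. *)

From HB Require Import structures.
From mathcomp Require Import all_boot all_order all_algebra.
From mathcomp Require Import reals.
From mathcomp Require Import complex.
Set Implicit Arguments. Unset Strict Implicit. Unset Printing Implicit Defensive.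
Import Order.TTheory GRing.Theory Num.Theory.
Local Open Scope ring_scope.

Notation cplx R := (complex (Real.sort R)).

Definition is_inner_product (R : realType) (V : lmodType (cplx R))
    (ip : V -> V -> cplx R) : Prop :=
  [/\ forall (a : cplx R) (x y z : V), ip (a *: x + y) z = a * ip x z + ip y z,
      forall x y : V, ip x y = (ip y x)^*,
      forall x : V, 0 <= ip x x
    & forall x : V, ip x x = 0 -> x = 0].

Definition hnorm (R : realType) (V : lmodType (cplx R))
    (ip : V -> V -> cplx R) (x : V) : R :=
  Num.sqrt (complex.Re (ip x x)).

Definition is_complete (R : realType) (V : lmodType (cplx R))
    (ip : V -> V -> cplx R) : Prop :=
  forall u : nat -> V,
    (forall eps : R, 0 < eps -> exists N : nat,
        forall m n : nat, (N <= m)%N -> (N <= n)%N ->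
          hnorm ip (u m - u n) < eps) ->
    exists l : V, forall eps : R, 0 < eps -> exists N : nat,
        forall n : nat, (N <= n)%N -> hnorm ip (u n - l) < eps.

Definition is_hilbert (R : realType) (V : lmodType (cplx R))
    (ip : V -> V -> cplx R) : Prop :=
  is_inner_product ip /\ is_complete ip.

Definition bounded_op (R : realType) (V : lmodType (cplx R))
    (ip : V -> V -> cplx R) (T : V -> V) : Prop :=
  (forall (a : cplx R) (x y : V), T (a *: x + y) = a *: T x + T y) /\
  exists M : R, forall x : V, hnorm ip (T x) <= M * hnorm ip x.

Definition is_adjoint (R : realType) (V : lmodType (cplx R))
    (ip : V -> V -> cplx R) (T S : V -> V) : Prop :=
  forall x y : V, ip (T x) y = ip x (S y).

Definition kernel (R : realType) (V : lmodType (cplx R)) (A : V -> V) : V -> Prop :=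
  fun x => A x = 0.

Definition ker_sub (R : realType) (V : lmodType (cplx R)) (A B : V -> V) : Prop :=
  forall x : V, kernel A x -> kernel B x.

Definition quasiposinormal (R : realType) (V : lmodType (cplx R))
    (A Astar : V -> V) : Prop := ker_sub A Astar.

Definition coquasiposinormal (R : realType) (V : lmodType (cplx R))
    (A Astar : V -> V) : Prop := ker_sub Astar A.

Definition opow (R : realType) (V : lmodType (cplx R)) (n : nat) (A : V -> V)
  : V -> V := iter n A.

From HB Require Import structures.
From mathcomp Require Import all_boot all_order all_algebra.
From mathcomp Require Import reals complex.
Import Order.TTheory GRing.Theory Num.Theory.
Local Open Scope ring_scope.

(* Write S for the adjoint of T.  Since <S T x, x> = ||T x||^2, the kernel of
   S T is that of T, and symmetrically the kernel of T S is that of S.  The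
   hypothesis N(S) ⊆ N(T) thus gives N(S^2) = N(S), hence N(S^k) = N(S) for all
   k >= 1, and so N(T) ⊆ N(T^n) ⊆ N(S^n) = N(S) ⊆ N(T).  Once N(T) = N(S), the
   same argument gives N(T^k) = N(T), and the powers inherit the equality of
   kernels. *)

Section KernelsOfPowers.

Context {R : realType} {V : lmodType (cplx R)}.

Lemma ker_sub_trans {f g h : V -> V} :
  ker_sub f g -> ker_sub g h -> ker_sub f h.
Proof. by move=> fg gh x /fg /gh. Qed.

Lemma opow_fix0 (f : V -> V) k : f 0 = 0 -> opow k f 0 = 0.
Proof. by move=> f0; elim: k => //= k ->. Qed.

Lemma opowSr (f : V -> V) k x : opow k.+1 f x = opow k f (f x).
Proof. exact: iterSr. Qed.

Lemma ker_sub_opow {f : V -> V} k : f 0 = 0 -> ker_sub f (opow k.+1 f).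
Proof. by move=> f0 x fx0; rewrite /kernel opowSr fx0 opow_fix0. Qed.

Lemma ker_opow_stable {f : V -> V} k :
  ker_sub (opow 2 f) f -> ker_sub (opow k.+1 f) f.
Proof.
move=> f2f; elim: k => [|k IHk] x //.
by rewrite /kernel opowSr => /IHk /f2f.
Qed.

Lemma ker_sub_opow_opow (f g : V -> V) k :
  g 0 = 0 -> ker_sub (opow 2 f) f -> ker_sub f g ->
  ker_sub (opow k.+1 f) (opow k.+1 g).
Proof.
move=> g0 f2f fg.
exact: ker_sub_trans (ker_opow_stable k f2f)
         (ker_sub_trans fg (ker_sub_opow k g0)).
Qed.

Context {ip : V -> V -> cplx R} (ip_inner : is_inner_product ip).

Lemma ip0x (z : V) : ip 0 z = 0.
Proof.
case: ip_inner => ipDl _ _ _.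
have := ipDl 1 0 0 z; rewrite scale1r addr0 mul1r => ip0_dbl.
by apply: (addrI (ip 0 z)); rewrite addr0 -ip0_dbl.
Qed.

Lemma ipx0 (z : V) : ip z 0 = 0.
Proof. by case: ip_inner => _ ipC _ _; rewrite ipC ip0x conjC0. Qed.

Lemma is_adjoint_sym {T S : V -> V} : is_adjoint ip T S -> is_adjoint ip S T.
Proof.
case: ip_inner => _ ipC _ _ adj x y.
by rewrite ipC -adj [in RHS]ipC.
Qed.

Lemma adjoint0 {T S : V -> V} : is_adjoint ip T S -> S 0 = 0.
Proof. by case: ip_inner => _ _ _ ipN adj; apply: ipN; rewrite -adj ipx0. Qed.

Lemma ker_adjoint_mul {T S : V -> V} x :
  is_adjoint ip T S -> S (T x) = 0 -> T x = 0.
Proof.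
by case: ip_inner => _ _ _ ipN adj STx0; apply: ipN; rewrite adj STx0 ipx0.
Qed.

Lemma ker_sq_sub {T S : V -> V} :
  is_adjoint ip S T -> ker_sub S T -> ker_sub (opow 2 S) S.
Proof. by move=> adj ST x /ST; apply: ker_adjoint_mul adj. Qed.

End KernelsOfPowers.

Theorem theorem5p6 (R : realType) (V : lmodType (cplx R))
    (ip : V -> V -> cplx R) (T Tstar : V -> V) :
  is_hilbert ip ->
  bounded_op ip T ->
  is_adjoint ip T Tstar ->
  coquasiposinormal T Tstar ->
  (exists n : nat, (1 <= n)%N /\ quasiposinormal (opow n T) (opow n Tstar)) ->
  forall m : nat, (1 <= m)%N ->
    quasiposinormal (opow m T) (opow m Tstar) /\
    coquasiposinormal (opow m T) (opow m Tstar).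
Proof.
move=> [ip_inner _] _ adj co [[|n] [// _ qn]] [//|m] _.
have adj' := is_adjoint_sym ip_inner adj.
have T0 : T 0 = 0 := adjoint0 ip_inner adj'.
have Ts0 : Tstar 0 = 0 := adjoint0 ip_inner adj.
have Ts2 : ker_sub (opow 2 Tstar) Tstar := ker_sq_sub ip_inner adj' co.
have q : ker_sub T Tstar.
  exact: ker_sub_trans (ker_sub_opow n T0)
           (ker_sub_trans qn (ker_opow_stable n Ts2)).
have T2 : ker_sub (opow 2 T) T := ker_sq_sub ip_inner adj q.
by split; apply: ker_sub_opow_opow.
Qed.
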